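(* Let $n\ge3$ and $j\ge 0$. Then $\mathcal{N}_j=N_{\mathcal{B}}(\mathbb{Z}\mathcal{N}_{j-1})$, where $N_{\mathcal{B}}(\mathbb{Z}\mathcal{N}_{j-1})=\{b\in\mathcal{B}: [b,m]\in\mathbb{Z}\mathcal{N}_{j-1}\text{ for all } m\in\mathbb{Z}\mathcal{N}_{j-1}\}$ and $\mathbb{Z}\mathcal{N}_{j-1}$ denotes the $\mathbb{Z}$-span of $\mathcal{N}_{j-1}$ in $\mathfrak{L}(n)$.
   Context: Fix an integer $n\ge 3$. A partition is a sequence $\Lambda=(\lambda_j)_{j\ge1}$ of non-negative integers with finite support; $\mathrm{wt}(\Lambda)=\sum_j j\lambda_j$; $\mathrm{Part}(k)$ is the set of partitions with $\lambda_j=0$ for $j>k$. Write $x^\Lambda=\prod_j x_j^{\lambda_j}$, $\deg(x^\Lambda)=\sum_j\lambda_j$, and let $\partial_k$ be the partial derivative with respect to $x_k$. $\mathfrak{L}(n)$ is the free $\mathbb{Z}$-module with basis $\mathcal{B}=\{x^\Lambda\partial_k : 1\le k\le n,\ \Lambda\in\mathrm{Part}(k-1)\}$, a Lie ring with bracket defined on basis elements by $[x^\Lambda\partial_k,x^\Theta\partial_j]=\partial_j(x^\Lambda)x^\Theta\partial_k$ if $j<k$, $-x^\Lambda\partial_k(x^\Theta)\partial_j$ if $j>k$, $0$ if $j=k$, extended bilinearly. For an integer $i\ge-1$, let $r_i\in\{1,\dots,n-1\}$ with $i\equiv r_i\pmod{n-1}$ and $h_i=\lfloor (i-1)/(n-1)\rfloor+1$.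 Define $\mathrm{WD}(x^\Lambda\partial_k)=\mathrm{wt}(\Lambda)-\deg(x^\Lambda)+n-k$ and $\mathrm{lev}_i(x^\Lambda\partial_k)=h_i\,\mathrm{WD}(x^\Lambda\partial_k)+\deg(x^\Lambda)-1$. For $i\ge-1$, $\mathcal{N}_i=\{b\in\mathcal{B}: \mathrm{lev}_j(b)\le j\text{ for some integer } -1\le j\le i\}$. *)

From mathcomp Require Import all_boot all_order all_algebra.
Set Implicit Arguments. Unset Strict Implicit. Unset Printing Implicit Defensive.
Import Order.TTheory GRing.Theory Num.Theory.

(* A candidate basis element x^Lambda d_k is encoded as a pair (k, lam)
   where lam = [:: lambda_1; ...; lambda_(k-1)] (so Lambda \in Part(k-1)
   is encoded by its first k-1 entries, the rest being 0). *)
Definition bas := (nat * seq nat)%type.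

Definition is_basis (n : nat) (b : bas) : bool :=
  [&& 1 <= b.1, b.1 <= n & size b.2 == b.1.-1].

Definition lamj (lam : seq nat) (i : nat) : nat := nth 0 lam i.-1.

Definition wt (lam : seq nat) : nat := \sum_(i < size lam) i.+1 * nth 0 lam i.
Definition deg (lam : seq nat) : nat := sumn lam.

Definition WD (n : nat) (b : bas) : int :=
  (Posz (wt b.2) - Posz (deg b.2) + Posz n - Posz b.1)%R.

Definition hh (n : nat) (i : int) : int := (divz (i - 1) (Posz n.-1) + 1)%R.

Definition lev (n : nat) (i : int) (b : bas) : int :=
  (hh n i * WD n b + Posz (deg b.2) - 1)%R.

Definition Nset (n : nat) (i : int) (b : bas) : Prop :=
  is_basis n b /\ exists j : int, (-1 <= j)%R /\ (j <= i)%R /\ (lev n j b <= j)%R.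

(* x^Lambda * x^Theta * x_l^{-1} restricted to x_1..x_(len): exponent sequence *)
Definition mon_shift (lam th : seq nat) (l len : nat) : seq nat :=
  mkseq (fun i => nth 0 lam i + nth 0 th i - (i == l.-1)) len.

(* Bracket of two basis elements: an integer times a basis element.
   [x^L d_k, x^T d_j] = d_j(x^L) x^T d_k      if j < k
                      = - x^L d_k(x^T) d_j    if j > k
                      = 0                     if j = k *)
Definition brb (b c : bas) : int * bas :=
  let: (k, lam) := b in let: (j, th) := c in
  if j < k then (Posz (lamj lam j), (k, mon_shift lam th j k.-1))
  else if k < j then ((- Posz (lamj th k))%R, (j, mon_shift lam th k j.-1))
  else (0%R, b).

(* Elements of L(n) are written as formal finite Z-combinations
   sum_i c_i b_i, encoded as a list of pairs (c_i, b_i); their value is the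
   coefficient function B -> Z below (two formal sums denote the same element
   iff their coefficient functions agree). *)
Definition fsum := seq (int * bas).

Definition coef (s : fsum) (e : bas) : int := (\sum_(p <- s | p.2 == e) p.1)%R.

Definition brs (b : bas) (s : fsum) : fsum :=
  map (fun p => ((p.1 * (brb b p.2).1)%R, (brb b p.2).2)) s.

Definition over (S : bas -> Prop) (s : fsum) : Prop := forall p, p \in s -> S p.2.

Definition in_span (S : bas -> Prop) (m : bas -> int) : Prop :=
  exists t : fsum, over S t /\ forall e, coef t e = m e.

Definition normB (n : nat) (S : bas -> Prop) (b : bas) : Prop :=
  is_basis n b /\ forall t : fsum, over S t -> in_span S (coef (brs b t)).

(* The bracket of two basis elements is a multiple of a basis element whose [WD] is
   [WD b + WD c - (n - 1)] and whose degree is [deg b + deg c - 1], so that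
   [lev_i [b, c] = lev_i b + lev_i c - h_i (n - 1)].  Comparing the indices witnessing
   [b \in N_j] and [c \in N_(j-1)] shows that every nonzero bracket of [b] with [N_(j-1)]
   stays in [N_(j-1)].  Conversely, if [b \notin N_j], some [c \in N_(j-1)] has a nonzero
   bracket with [b] outside [N_(j-1)]: a partial derivative [d_l] if [j = 0] or
   [b = x_1^d d_n], and otherwise [x_1^(h_j - 1) x_l d_(l+1)] for a suitable [l]; the latter
   has degree [h_j] and [WD = n - 2], hence lies in [N_((h_j - 1)(n - 1))].  Since brackets
   of basis elements are multiples of basis elements, these are the two inclusions. *)

From mathcomp Require Import all_boot all_order all_algebra.
From mathcomp Require Import zify.
From Stdlib Require Import Classical_Prop.
Import Order.TTheory GRing.Theory Num.Theory.

Set Implicit Arguments. Unset Strict Implicit. Unset Printing Implicit Defensive.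

Section Floor.
Local Open Scope ring_scope.
Variable n : nat.
Hypothesis n_gt1 : (1 < n)%N.

Lemma hh_bounds (i : int) :
  (hh n i - 1) * Posz n.-1 <= i - 1 /\ i - 1 < hh n i * Posz n.-1.
Proof.
have m_gt0 : 0 < Posz n.-1 by lia.
have := divz_eq (i - 1) (Posz n.-1).
have := modz_ge0 (i - 1) (lt0r_neq0 m_gt0).
have := ltz_pmod (i - 1) m_gt0.
rewrite /hh; set q := divz _ _; set r := modz _ _ => r_lt r_ge0 i_eq.
split; nia.
Qed.

Lemma hh_ge1 (i : int) : 1 <= i -> 1 <= hh n i.
Proof. by move=> ?; have := hh_bounds i; nia. Qed.

Lemma le_hh_mul (i : int) : i <= hh n i * Posz n.-1.
Proof. by have := hh_bounds i; nia. Qed.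

Lemma le_hh (i i' : int) : i <= i' -> hh n i <= hh n i'.
Proof. by move=> ?; have := hh_bounds i; have := hh_bounds i'; nia. Qed.

Lemma hh_le_subr1 (i : int) : hh n i <= hh n (i - 1) + 1.
Proof. by have := hh_bounds i; have := hh_bounds (i - 1); nia. Qed.

Lemma hh_mul (g : int) : 0 <= g -> hh n (g * Posz n.-1) = g.
Proof. by move=> ?; have := hh_bounds (g * Posz n.-1); nia. Qed.

Lemma hh0 : hh n 0 = 0.
Proof. by rewrite -(mul0r (Posz n.-1)) hh_mul. Qed.

End Floor.

(* This is where [3 <= n] is needed: [hh 2 (-1) = -1]. *)
Lemma hhN1 n : (2 < n)%N -> hh n (-1) = 0%R.
Proof. by move=> n_gt2; have := hh_bounds (ltnW n_gt2) (-1); nia. Qed.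

Lemma hh_ge0 n (i : int) : (2 < n)%N -> (-1 <= i)%R -> (0 <= hh n i)%R.
Proof. by move=> n_gt2 i_ge; rewrite -(hhN1 n_gt2); apply: (le_hh (ltnW n_gt2)). Qed.

Lemma wt_widen len lam : size lam <= len ->
  wt lam = \sum_(i < len) i.+1 * nth 0 lam i.
Proof.
move=> le_len; rewrite /wt (big_ord_widen _ (fun i => i.+1 * nth 0 lam i) le_len).
rewrite big_mkcond; apply: eq_bigr => i _.
by case: ltnP => // ?; rewrite nth_default ?muln0.
Qed.

Lemma deg_widen len lam : size lam <= len ->
  deg lam = \sum_(i < len) nth 0 lam i.
Proof.
elim: lam len => [|x lam IH] [|len] //= le_len.
- by rewrite big1 // => i _; rewrite nth_nil.
- by rewrite big1 // => i _; rewrite nth_nil.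
- by rewrite big_ord_recl (IH len).
Qed.

Lemma sum_eqn_mul len p (F : nat -> nat) : p < len ->
  \sum_(i < len) (i == p :> nat) * F i = F p.
Proof.
move=> lt_p; rewrite (bigD1 (Ordinal lt_p)) //= eqxx mul1n big1 ?addn0 // => i.
by rewrite -val_eqE /= => /negbTE ->.
Qed.

Lemma deg_le_wt lam : deg lam <= wt lam.
Proof. by rewrite (deg_widen (leqnn _)) /wt; apply: leq_sum => i _; rewrite mulSn leq_addr. Qed.

Lemma wt_le_size_deg lam : wt lam <= size lam * deg lam.
Proof.
rewrite (deg_widen (leqnn _)) /wt big_distrr /=.
by apply: leq_sum => i _; apply: leq_mul.
Qed.

Section MonShift.
Variables (lam th : seq nat) (l len : nat).
Hypotheses (l_ge1 : 1 <= l) (l_le : l <= len).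
Hypotheses (size_lam : size lam <= len) (size_th : size th <= len).
Hypothesis lamj_gt0 : 0 < lamj lam l + lamj th l.

Lemma nth_mon_shift (i : 'I_len) :
  nth 0 (mon_shift lam th l len) i + (i == l.-1 :> nat) = nth 0 lam i + nth 0 th i.
Proof. by move: lamj_gt0; rewrite /lamj nth_mkseq //; case: eqP => [->|_]; lia. Qed.

Lemma deg_mon_shift : deg (mon_shift lam th l len) + 1 = deg lam + deg th.
Proof.
have lt_l : l.-1 < len by lia.
rewrite !(deg_widen (len := len)) ?size_mkseq // -big_split /=.
have -> : 1 = \sum_(i < len) (i == l.-1 :> nat) * 1 by rewrite (sum_eqn_mul (fun=> 1)).
rewrite -big_split; apply: eq_bigr => i _ /=.
by rewrite muln1 nth_mon_shift.
Qed.

Lemma wt_mon_shift : wt (mon_shift lam th l len) + l = wt lam + wt th.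
Proof.
have lt_l : l.-1 < len by lia.
rewrite !(wt_widen (len := len)) ?size_mkseq // -big_split /=.
have {2}-> : l = \sum_(i < len) (i == l.-1 :> nat) * i.+1.
  by rewrite (sum_eqn_mul (fun i => i.+1)) // prednK.
rewrite -big_split; apply: eq_bigr => i _ /=.
by rewrite [_ * i.+1]mulnC -!mulnDr nth_mon_shift.
Qed.

End MonShift.

Lemma brb_graded n b c : is_basis n b -> is_basis n c -> (brb b c).1 != 0%R ->
  [/\ is_basis n (brb b c).2,
      WD n (brb b c).2 = (WD n b + WD n c - Posz n.-1)%R &
      deg (brb b c).2.2 + 1 = deg b.2 + deg c.2].
Proof.
case: b c => k lam [l th]; rewrite /is_basis /= => /and3P[k_ge1 k_le /eqP size_lam].
case/and3P => l_ge1 l_le /eqP size_th; rewrite /brb.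
case: ltnP => [lt_lk|le_kl]; last case: ltnP => [lt_kl|le_lk]; rewrite //= => nz.
- have [h1 h2 h3 h4 h5] : [/\ 1 <= l, l <= k.-1, size lam <= k.-1, size th <= k.-1
                           & 0 < lamj lam l + lamj th l] by split; lia.
  have := deg_mon_shift h1 h2 h3 h4 h5; have := wt_mon_shift h1 h2 h3 h4 h5.
  by rewrite /WD /= size_mkseq; split; lia.
- have [h1 h2 h3 h4 h5] : [/\ 1 <= k, k <= l.-1, size lam <= l.-1, size th <= l.-1
                           & 0 < lamj lam k + lamj th k] by split; lia.
  have := deg_mon_shift h1 h2 h3 h4 h5; have := wt_mon_shift h1 h2 h3 h4 h5.
  by rewrite /WD /= size_mkseq; split; lia.
Qed.

Lemma nth_gt0_of_deg_gt0 lam : 0 < deg lam -> exists2 i, i < size lam & 0 < nth 0 lam i.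
Proof.
rewrite /deg; elim: lam => [|x lam IH] //=.
by case: (posnP x) => [-> /IH [i lt_i pos] | x_gt0 _]; [exists i.+1 | exists 0].
Qed.

Section HeadOnly.
Variable lam : seq nat.
Hypothesis nth_eq0 : forall i, 0 < i -> nth 0 lam i = 0.

Lemma deg_head_only : deg lam = nth 0 lam 0.
Proof.
rewrite (deg_widen (leqnn _)); case: lam nth_eq0 => [|x s] /= z; first by rewrite big_ord0.
by rewrite big_ord_recl big1 ?addn0 // => i _; apply: z.
Qed.

Lemma wt_head_only : wt lam = deg lam.
Proof.
rewrite (deg_widen (leqnn _)) /wt; apply: eq_bigr => -[[|i] lt_i] _ /=.
  by rewrite mul1n.
by rewrite nth_eq0 ?muln0.
Qed.

End HeadOnly.

(* [probe g l] is x_1^(g-1) x_l d_(l+1). *)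
Definition probe (g l : nat) : bas :=
  (l.+1, mkseq (fun t => (t == 0) * g.-1 + (t == l.-1)) l).

Definition dpartial (l : nat) : bas := (l, nseq l.-1 0).

Section Probe.
Variables g l : nat.

Lemma nth_probe t : t < l -> nth 0 (probe g l).2 t = (t == 0) * g.-1 + (t == l.-1).
Proof. by move=> lt_t; rewrite nth_mkseq. Qed.

Lemma probe_basis n : l < n -> is_basis n (probe g l).
Proof. by move=> lt_l; rewrite /is_basis /= size_mkseq eqxx andbT. Qed.

Hypothesis l_gt0 : 0 < l.

Lemma wt_probe : wt (probe g l).2 = g.-1 + l.
Proof.
rewrite (wt_widen (len := l)) ?size_mkseq //.
rewrite (eq_bigr (fun t : 'I_l => (t == 0 :> nat) * g.-1 + (t == l.-1 :> nat) * t.+1)); last first.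
  by move=> t _; rewrite nth_probe //; case: eqP => ?; case: eqP => ? /=; lia.
by rewrite big_split /= (sum_eqn_mul (fun=> g.-1)) ?(sum_eqn_mul (fun t => t.+1)) //; lia.
Qed.

Hypothesis g_gt0 : 0 < g.

Lemma deg_probe : deg (probe g l).2 = g.
Proof.
rewrite (deg_widen (len := l)) ?size_mkseq //.
rewrite (eq_bigr (fun t : 'I_l => (t == 0 :> nat) * g.-1 + (t == l.-1 :> nat) * 1)); last first.
  by move=> t _; rewrite nth_probe ?muln1.
by rewrite big_split /= (sum_eqn_mul (fun=> g.-1)) ?(sum_eqn_mul (fun=> 1)) //; lia.
Qed.

Lemma WD_probe n : l < n -> WD n (probe g l) = (Posz n.-1 - 1)%R.
Proof. by move=> lt_l; rewrite /WD wt_probe deg_probe /=; lia. Qed.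

End Probe.

Lemma dpartial_basis n l : 0 < l <= n -> is_basis n (dpartial l).
Proof. by move=> l_range; rewrite /is_basis /= size_nseq eqxx andbT. Qed.

Lemma deg_dpartial l : deg (dpartial l).2 = 0.
Proof. by rewrite /deg sumn_nseq. Qed.

Definition brb_escapes n (i : int) b c : Prop :=
  [/\ Nset n i c, (brb b c).1 != 0%R & ~ Nset n i (brb b c).2].

Section Levels.
Local Open Scope ring_scope.
Variable n : nat.

Lemma WD_ge0 b : is_basis n b -> 0 <= WD n b.
Proof.
by case: b => k lam /and3P[/= *]; have := deg_le_wt lam; rewrite /WD /=; lia.
Qed.

Lemma WD_add_deg_le b : is_basis n b -> (deg b.2 <= 1)%N ->
  WD n b + Posz (deg b.2) <= Posz n.-1.
Proof.
case: b => k lam /and3P[/= k_ge1 k_le /eqP size_lam] deg_le1.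
by have := wt_le_size_deg lam; rewrite size_lam /WD /=; nia.
Qed.

Lemma Nset_le i i' b : i <= i' -> Nset n i b -> Nset n i' b.
Proof.
by move=> le_ii' [bB [j [j_ge [j_le lev_le]]]]; split=> //; exists j; do !split=> //; lia.
Qed.

Lemma lev_brb i b c : is_basis n b -> is_basis n c -> (brb b c).1 != 0 ->
  lev n i (brb b c).2 = lev n i b + lev n i c - hh n i * Posz n.-1.
Proof.
move=> bB cB nz; have [_ WD_r deg_r] := brb_graded bB cB nz.
by rewrite /lev WD_r !mulrDr mulrN; lia.
Qed.

Hypothesis n_ge3 : (3 <= n)%N.
Let n_gt1 : (1 < n)%N := ltnW n_ge3.

Lemma Nset_WD_le i b : Nset n i b ->
  WD n b <= Posz n.-1 /\ ((1 <= deg b.2)%N -> WD n b < Posz n.-1).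
Proof.
case=> bB [i' [i'_ge [_ lev_le]]]; have := WD_ge0 bB.
case: (leqP (deg b.2) 1) => [deg_le1|deg_gt1] WD_ge0.
  by have := WD_add_deg_le bB deg_le1; split; lia.
have := hh_ge0 n_ge3 i'_ge; have := le_hh_mul n_gt1 i'.
by move: lev_le; rewrite /lev; split; nia.
Qed.

Lemma Nset_brb_closed (j : int) b c :
  Nset n j b -> Nset n (j - 1) c -> (brb b c).1 != 0 -> Nset n (j - 1) (brb b c).2.
Proof.
move=> Nb Nc nz.
have [wb_le _] := Nset_WD_le Nb; have [wc_le wc_lt] := Nset_WD_le Nc.
case: Nb Nc => bB [A [A_ge [A_le levA]]] [cB [C [C_ge [C_le levC]]]].
have [rB WD_r _] := brb_graded bB cB nz.
have := WD_ge0 rB; rewrite WD_r => WD_r_ge0.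
have wb_ge0 := WD_ge0 bB; have wc_ge0 := WD_ge0 cB.
have A_le_hA := le_hh_mul n_gt1 A; have C_le_hC := le_hh_mul n_gt1 C.
have hA_ge0 := hh_ge0 n_ge3 A_ge.
rewrite /lev in levA levC; split=> //.
case: (lerP (hh n A) (hh n C)) => [hA_le_hC|hC_lt_hA].
- exists C; do !split=> //; rewrite lev_brb // /lev.
  have : 0 <= (hh n C - hh n A) * (Posz n.-1 - WD n b) by apply: mulr_ge0; lia.
  nia.
- have C_lt_A : C < A.
    by rewrite ltNge; apply: contraTN hC_lt_hA => /(le_hh n_gt1); rewrite -leNgt.
  exists (A - 1); do !split; [lia | lia | rewrite lev_brb // /lev].
  have hA_le := hh_le_subr1 n_gt1 A.
  have le_hA : hh n (A - 1) <= hh n A by apply: le_hh; lia.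
  have hC_le : hh n C <= hh n (A - 1) by apply: le_hh; lia.
  have h_ge0 : 0 <= hh n (A - 1) by apply: hh_ge0; lia.
  set h := hh n (A - 1) in hA_le le_hA hC_le h_ge0 *.
  suff c_part : Posz (deg c.2) <= (hh n A - h) * WD n b + h * (Posz n.-1 - WD n c) by nia.
  have : 0 <= (hh n A - h) * WD n b by apply: mulr_ge0; lia.
  have : 0 <= h * (Posz n.-1 - WD n c) by apply: mulr_ge0; lia.
  case: (posnP (deg c.2)) => [-> | deg_c_gt0]; first lia.
  have {}wc_lt := wc_lt deg_c_gt0.
  case: (lerP h (hh n C)) => [h_le_hC|hC_lt_h]; last by nia.
  (* Then [h = hh n C = hh n A - 1], and [0 <= WD] of the bracket forces [WD n b >= 1]. *)
  nia.
Qed.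

Lemma Nset_N1 b : Nset n (-1) b <-> is_basis n b /\ deg b.2 = 0%N.
Proof.
split=> [[bB [i [i_ge [i_le]]]] | [bB deg0]].
  have -> : i = -1 by lia.
  by rewrite /lev hhN1 // mul0r add0r; split=> //; lia.
by split=> //; exists (-1); rewrite /lev hhN1 // mul0r deg0.
Qed.

Lemma dpartial_in_Nset l : (0 < l <= n)%N -> Nset n (-1) (dpartial l).
Proof.
by move=> l_range; apply/Nset_N1; rewrite dpartial_basis ?deg_dpartial.
Qed.

Lemma probe_in_Nset (j : int) l : 1 <= j -> (0 < l < n)%N ->
  Nset n (j - 1) (probe `|hh n j| l).
Proof.
move=> j_ge1 /andP[l_gt0 l_lt]; have h_ge1 := hh_ge1 n_gt1 j_ge1.
have g_gt0 : (0 < `|hh n j|)%N by lia.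
apply: (@Nset_le ((hh n j - 1) * Posz n.-1)); first by have := hh_bounds n_gt1 j; lia.
split; first exact: probe_basis.
exists ((hh n j - 1) * Posz n.-1); do !split=> //; first by nia.
rewrite /lev hh_mul //; last by lia.
by rewrite WD_probe // deg_probe //; nia.
Qed.

Variables (k : nat) (lam : seq nat) (j : int).
Hypotheses (bB : is_basis n (k, lam)) (b_notin : ~ Nset n j (k, lam)).

Lemma lev_gt_notin_Nset i : -1 <= i -> i <= j -> i < lev n i (k, lam).
Proof.
move=> i_ge i_le; rewrite ltNge; apply/negP => lev_le.
by apply: b_notin; split=> //; exists i.
Qed.

Lemma deg_ge2_notin_Nset : 0 <= j -> (2 <= deg lam)%N.
Proof.
by move=> j_ge0; have := lev_gt_notin_Nset (i := 0); rewrite /lev hh0 // mul0r /=; lia.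
Qed.

Lemma notin_Nset_pred r : 1 <= j -> WD n r = WD n (k, lam) - 1 ->
  Posz (deg r.2) = Posz (deg lam) + hh n j - 1 -> ~ Nset n (j - 1) r.
Proof.
move=> j_ge1 WD_r deg_r [_ [i [i_ge [i_le]]]]; rewrite /lev WD_r deg_r mulrBr mulr1.
have lev_i : i < lev n i (k, lam) by apply: lev_gt_notin_Nset; lia.
have hi_le : hh n i <= hh n (i + 1) by apply: le_hh; lia.
have hi1_le : hh n (i + 1) <= hh n j by apply: le_hh; lia.
rewrite /lev /= in lev_i; case: (ltrP (hh n i) (hh n j)) => [|hj_le]; first lia.
have hi1 : hh n (i + 1) = hh n i by lia.
have : i + 1 < lev n (i + 1) (k, lam) by apply: lev_gt_notin_Nset; lia.
by rewrite /lev /= hi1; lia.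
Qed.

Lemma probe_escapes l : 1 <= j -> (0 < l < n)%N ->
  (brb (k, lam) (probe `|hh n j| l)).1 != 0 ->
  brb_escapes n (j - 1) (k, lam) (probe `|hh n j| l).
Proof.
move=> j_ge1 l_range nz; have h_ge1 := hh_ge1 n_gt1 j_ge1.
have g_gt0 : (0 < `|hh n j|)%N by lia.
case/andP: (l_range) => l_gt0 l_lt.
have [_ WD_r deg_r] := brb_graded bB (probe_basis _ l_lt) nz.
split=> //; first exact: probe_in_Nset.
apply: notin_Nset_pred => //; first by rewrite WD_r WD_probe //; lia.
by move: deg_r; rewrite deg_probe //=; lia.
Qed.

Lemma escape_j0 : j = 0 -> exists c, brb_escapes n (j - 1) (k, lam) c.
Proof.
move=> j0; have deg_ge2 : (2 <= deg lam)%N by apply: deg_ge2_notin_Nset; rewrite j0.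
have [i lt_i lam_i] := nth_gt0_of_deg_gt0 (ltnW deg_ge2).
case/and3P: bB => /= k_ge1 k_le /eqP size_lam.
have cB : is_basis n (dpartial i.+1) by apply: dpartial_basis; lia.
have nz : (brb (k, lam) (dpartial i.+1)).1 != 0.
  by rewrite /brb /= (_ : i.+1 < k)%N /lamj //=; lia.
have [_ _ deg_r] := brb_graded bB cB nz.
exists (dpartial i.+1); rewrite j0 sub0r; split=> //; first by apply: dpartial_in_Nset; lia.
by case/Nset_N1 => _; move: deg_r; rewrite deg_dpartial /=; lia.
Qed.

Lemma escape_inner l : 1 <= j -> (1 < l < k)%N -> (0 < lamj lam l)%N ->
  exists c, brb_escapes n (j - 1) (k, lam) c.
Proof.
move=> j_ge1 /andP[l_gt1 l_lt] lam_l; case/and3P: bB => /= k_ge1 k_le _.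
exists (probe `|hh n j| l.-1); apply: probe_escapes => //; first lia.
by rewrite /brb /= prednK ?l_lt //=; lia.
Qed.

Lemma escape_top : 1 <= j -> (k < n)%N -> exists c, brb_escapes n (j - 1) (k, lam) c.
Proof.
move=> j_ge1 k_lt; case/and3P: bB => /= k_ge1 k_le _.
exists (probe `|hh n j| k); apply: probe_escapes => //; first lia.
rewrite /brb /= ltnNge leqnSn /= ltnSn /lamj nth_probe; last lia.
by rewrite eqxx /=; lia.
Qed.

Lemma escape_x1 : 0 <= j -> k = n -> (forall i, 0 < i -> nth 0 lam i = 0)%N ->
  exists c, brb_escapes n (j - 1) (k, lam) c.
Proof.
move=> j_ge0 kn head_only; have deg_ge2 := deg_ge2_notin_Nset j_ge0.
have c1B : is_basis n (dpartial 1) by apply: dpartial_basis; lia.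
have nz : (brb (k, lam) (dpartial 1)).1 != 0.
  by have := deg_head_only head_only; rewrite /brb /= (_ : 1 < k)%N /lamj //=; lia.
have [_ WD_r deg_r] := brb_graded bB c1B nz.
have WDb : WD n (k, lam) = 0 by rewrite /WD /= wt_head_only // kn; lia.
exists (dpartial 1); split=> //; first by apply: (@Nset_le (-1)); [lia | apply: dpartial_in_Nset; lia].
have WDc : WD n (dpartial 1) = Posz n.-1 by rewrite /WD /wt big_ord0 /=; lia.
move=> [_ [i [i_ge [i_le]]]]; rewrite /lev WD_r WDb WDc.
have : j < lev n j (k, lam) by apply: lev_gt_notin_Nset; lia.
by move: deg_r; rewrite /lev WDb deg_dpartial /=; lia.
Qed.

Lemma exists_escape : 0 <= j -> exists c, brb_escapes n (j - 1) (k, lam) c.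
Proof.
move=> j_ge0; have [j0 | j_ge1] : j = 0 \/ 1 <= j by lia.
  exact: escape_j0.
case: (boolP (has (fun l => 0 < lamj lam l)%N (iota 2 (k - 2)))).
  by case/hasP => l; rewrite mem_iota => l_range /(escape_inner j_ge1); apply; lia.
move/hasPn => inner0; case: (ltnP k n) => [k_lt | k_ge]; first exact: escape_top.
case/and3P: bB => /= _ k_le /eqP size_lam.
apply: escape_x1 => // [|i i_gt0]; first lia.
case: (ltnP i.+1 k) => [lt_ik | le_ki]; last by rewrite nth_default // size_lam; lia.
by have := inner0 i.+1; rewrite mem_iota /lamj /=; lia.
Qed.

End Levels.

Lemma coef_filter_neq0 (s : fsum) e : coef [seq p <- s | p.1 != 0%R] e = coef s e.
Proof.
rewrite /coef big_filter_cond big_mkcond [RHS]big_mkcond /=.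
by apply: eq_bigr => p _; case: eqP => [->|_]; case: (p.2 == e).
Qed.

Lemma coef_neq0_mem (s : fsum) e : coef s e != 0%R -> exists2 p, p \in s & p.2 = e.
Proof.
rewrite /coef; case: (boolP (has (fun p => p.2 == e) s)) => [/hasP[p p_in /eqP] | /hasPn none].
  by exists p.
by rewrite big1_seq ?eqxx // => p /andP[/eqP p_e /none]; rewrite p_e eqxx.
Qed.

Lemma normB_of_brb_closed n (S : bas -> Prop) b : is_basis n b ->
  (forall c, S c -> (brb b c).1 != 0%R -> S (brb b c).2) -> normB n S b.
Proof.
move=> bB closed; split=> // t St.
exists [seq p <- brs b t | p.1 != 0%R]; split=> [p | e]; last exact: coef_filter_neq0.
rewrite mem_filter => /andP[nz /mapP[q q_in p_eq]]; rewrite p_eq /= in nz *.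
apply: closed; first exact: St.
by apply: contra nz => /eqP ->; rewrite mulr0.
Qed.

Lemma brb_closed_of_normB n (S : bas -> Prop) b c :
  normB n S b -> S c -> (brb b c).1 != 0%R -> S (brb b c).2.
Proof.
move=> [_ b_norm] Sc nz; have [|t [St coef_t]] := b_norm [:: (1%R, c)].
  by move=> p; rewrite inE => /eqP ->.
have : coef t (brb b c).2 != 0%R.
  by rewrite coef_t /coef big_cons big_nil /= eqxx mul1r addr0.
by case/coef_neq0_mem => p /St; move=> + <-.
Qed.

Theorem proposition3p3 (n j : nat) (hn : 3 <= n) :
  forall b : bas, Nset n (Posz j) b <-> normB n (Nset n (Posz j - 1)%R) b.
Proof.
move=> b; split=> [Nb | b_norm].
  apply: normB_of_brb_closed => [|c Nc nz]; first by case: Nb.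
  exact: Nset_brb_closed Nb Nc nz.
apply: NNPP => b_notin; case: b b_norm b_notin => k lam b_norm b_notin.
have [c [Nc nz r_notin]] := exists_escape hn b_norm.1 b_notin (le0z_nat j).
exact/r_notin/(brb_closed_of_normB b_norm Nc nz).
Qed.
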